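(* Let $n=2k$ with $k\ge1$, and let $$W(X_1,\dots,X_n)=\sum_{j=1}^nX_j+\sum_{j=1}^n\frac1{X_j}+\prod_{j=1}^nX_j$$ on $(\mathbb{C}^* )^n$. Then every critical point of $W$ in $(\mathbb{C}^* )^n$ is non-degenerate, i.e. the Hessian matrix $(\partial^2W/\partial X_j\partial X_k)$ is invertible at every point where $\nabla W=0$.
   Context: $W$ is the superpotential $\sum_{v\in\mathrm{vert}(P)}x^v$ of the pseudo del Pezzo polytope $P^k_{pdP}\subset\mathbb{R}^{2k}$. This polytope is the convex hull of $\pm e_1,\dots,\pm e_{2k}$ and $e_1+\dots+e_{2k}$, and it is the polytope associated with the pseudo del Pezzo toric variety $U_k$. *)

From HB Require Import structures.
From mathcomp Require Import all_boot all_order all_algebra.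
Set Implicit Arguments. Unset Strict Implicit. Unset Printing Implicit Defensive.
Import Order.TTheory GRing.Theory Num.Theory.
Local Open Scope ring_scope.

(* A Laurent polynomial in n variables over C, given as a finite list of
   monomials (coefficient, exponent vector in Z^n). *)
Definition laurent (C : Type) (n : nat) := seq (C * ('I_n -> int)).

Definition leval (C : unitRingType) (n : nat) (p : laurent C n) (x : 'I_n -> C) : C :=
  \sum_(m <- p) (fst m * \prod_(i < n) (x i) ^ (snd m i)).

Definition lderiv (C : unitRingType) (n : nat) (j : 'I_n) (p : laurent C n) : laurent C n :=
  [seq (fst m * (snd m j)%:~R, fun i => snd m i - (i == j)%:Z) | m <- p].

Definition W_pdP (C : unitRingType) (n : nat) : laurent C n :=
  [seq (1, fun i => (i == j)%:Z) | j <- enum 'I_n]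
  ++ [seq (1, fun i => - (i == j)%:Z) | j <- enum 'I_n]
  ++ [:: (1, fun _ => 1%:Z)].

Definition gradient (C : unitRingType) (n : nat) (p : laurent C n) (x : 'I_n -> C) : 'I_n -> C :=
  fun j => leval (lderiv j p) x.

Definition hessian (C : unitRingType) (n : nat) (p : laurent C n) (x : 'I_n -> C) : 'M[C]_n :=
  \matrix_(i < n, j < n) leval (lderiv i (lderiv j p)) x.

From HB Require Import structures.
From mathcomp Require Import all_boot all_order all_algebra.
From mathcomp Require Import ring zify.
Set Implicit Arguments.
Unset Strict Implicit.
Unset Printing Implicit Defensive.
Import Order.TTheory GRing.Theory Num.Theory.
Local Open Scope ring_scope.

(* Write P = X_1 ... X_n.  Differentiating the Laurent polynomial gives
     dW/dX_j = (X_j^2 + P X_j - 1) / X_j^2,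
     Hess W  = diag((2 - P X_j) / X_j^3) + P u^T u,   u_j = X_j^-1,
   so the Hessian is a diagonal matrix plus a rank-one matrix, and such a
   matrix D + c u^T u is invertible when D is and 1 + c sum_j u_j^2 / D_j != 0.
   At a critical point each X_j is a root of t^2 + P t - 1, so X_j is either
   a := X_1 or -a^-1; if m coordinates equal a and r = n - m equal -a^-1, then
   a - a^-1 = -P = -(a^m (-a^-1)^r).  The diagonal entries become
   (1 + X_j^2) / X_j^3 and the rank-one condition reads
   1 + (m - r)(1 - a^2)/(1 + a^2) != 0.  In characteristic 0 both 1 + a^2 != 0
   and this condition follow from the equation for a: otherwise a^2 is a
   rational function of the even integer d = m - r, and clearing denominators
   yields an integer identity 4 (d-1)^m (d+1)^r = (d+1)^(m+1) (d-1)^(r+1),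
   impossible modulo 2.  The file first evaluates monomials and computes the
   gradient and Hessian of W, then proves the linear-algebra criterion, then the
   scalar facts about a, and finally combines them. *)

Lemma eq_by_relation (R : pzRingType) (h u v : R) : h = 0 -> u - v = h -> u = v.
Proof. by move=> h0 uv; apply/eqP; rewrite -subr_eq0 uv h0. Qed.

Lemma sum_two_valued (V : nmodType) (T : finType) (A : {set T}) (G : T -> V) (u w : V) :
  (forall j, j \in A -> G j = u) -> (forall j, j \notin A -> G j = w) ->
  \sum_j G j = u *+ #|A| + w *+ #|~: A|.
Proof.
move=> Gu Gw; rewrite (bigID (mem A)) /=; congr (_ + _).
  by rewrite -sumr_const; apply: eq_big => // j /Gu.
by rewrite -sumr_const; apply: eq_big => [j|j]; rewrite ?in_setC // => /Gw.
Qed.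

Lemma prod_two_valued (R : comPzRingType) (T : finType) (A : {set T}) (G : T -> R) (u w : R) :
  (forall j, j \in A -> G j = u) -> (forall j, j \notin A -> G j = w) ->
  \prod_j G j = u ^+ #|A| * w ^+ #|~: A|.
Proof.
move=> Gu Gw; rewrite (bigID (mem A)) /=; congr (_ * _).
  by rewrite -prodr_const; apply: eq_big => // j /Gu.
by rewrite -prodr_const; apply: eq_big => [j|j]; rewrite ?in_setC // => /Gw.
Qed.

Lemma sum_supported (R : nmodType) (I : finType) (j : I) (G : I -> R) :
  (forall l, l != j -> G l = 0) -> \sum_l G l = G j.
Proof. by move=> G0; rewrite (bigD1 j) //= big1 ?addr0. Qed.

Section Monomials.
Variables (F : fieldType) (n : nat) (x : 'I_n -> F).
Hypothesis x_neq0 : forall l, x l != 0.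

Lemma monomialD (e f : 'I_n -> int) :
  \prod_l x l ^ (e l + f l) = \prod_l x l ^ e l * \prod_l x l ^ f l.
Proof. by rewrite -big_split; apply: eq_bigr => l _; rewrite expfzDr. Qed.

Lemma monomial_const (c : int) : \prod_l x l ^ c = (\prod_l x l) ^ c.
Proof. by rewrite (big_morph (fun y => y ^ c) (fun y z => expfzMl y z c) (exp1rz _ c)). Qed.

Lemma monomial_delta (j : 'I_n) (c : int) : \prod_l x l ^ (c * (l == j)%:Z) = x j ^ c.
Proof.
rewrite (bigD1 j) //= eqxx mulr1 big1 ?mulr1 // => l /negbTE ->.
by rewrite mulr0 expr0z.
Qed.

Lemma monomial_delta1 (j : 'I_n) : \prod_l x l ^ (l == j)%:Z = x j.
Proof. by under eq_bigr => l _ do rewrite -[(l == j)%:Z]mul1r; rewrite monomial_delta expr1z. Qed.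

Lemma monomial_deltaN (j : 'I_n) : \prod_l x l ^ (- (l == j)%:Z) = (x j)^-1.
Proof. by under eq_bigr => l _ do rewrite -mulN1r; rewrite monomial_delta exprN1. Qed.

Lemma monomial_subdelta (e : 'I_n -> int) (j : 'I_n) :
  \prod_l x l ^ (e l - (l == j)%:Z) = (\prod_l x l ^ e l) / x j.
Proof. by rewrite (monomialD e (fun l => - (l == j)%:Z)) monomial_deltaN. Qed.

End Monomials.

Lemma lderiv_cat (R : unitRingType) n j (p q : laurent R n) :
  lderiv j (p ++ q) = lderiv j p ++ lderiv j q.
Proof. exact: map_cat. Qed.

Lemma leval_cat (R : unitRingType) n (p q : laurent R n) x :
  leval (p ++ q) x = leval p x + leval q x.
Proof. exact: big_cat. Qed.

Lemma lderiv_enum (R : unitRingType) n j (f : 'I_n -> R * ('I_n -> int)) :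
  lderiv j [seq f l | l <- enum 'I_n] =
  [seq ((f l).1 * ((f l).2 j)%:~R, fun i => (f l).2 i - (i == j)%:Z) | l <- enum 'I_n].
Proof. by rewrite /lderiv -map_comp. Qed.

Lemma leval_enum (R : unitRingType) n (f : 'I_n -> R * ('I_n -> int)) x :
  leval [seq f l | l <- enum 'I_n] x = \sum_l (f l).1 * \prod_i x i ^ (f l).2 i.
Proof. by rewrite /leval big_map enumT. Qed.

Lemma gradient_W (F : fieldType) n (x : 'I_n -> F) (j : 'I_n) :
  (forall l, x l != 0) ->
  gradient (W_pdP F n) x j = (x j ^+ 2 + (\prod_i x i) * x j - 1) / x j ^+ 2.
Proof.
move=> x_neq0.
rewrite /gradient /W_pdP !lderiv_cat !lderiv_enum !leval_cat !leval_enum /leval big_seq1 /=.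
rewrite !(@sum_supported _ _ j) => [|l|l]; last first.
- by rewrite eq_sym => /negbTE ->; rewrite mulr0z mulr0 mul0r.
- by rewrite eq_sym => /negbTE ->; rewrite oppr0 mulr0z mulr0 mul0r.
rewrite /= eqxx !monomial_subdelta // monomial_delta1 monomial_deltaN monomial_const //.
by rewrite expr1z !mul1r rmorphN rmorph1; field; exact: x_neq0.
Qed.

Lemma hessian_W (F : fieldType) n (x : 'I_n -> F) :
  (forall l, x l != 0) ->
  hessian (W_pdP F n) x =
  diag_mx (\row_i ((2 - (\prod_l x l) * x i) / x i ^+ 3))
  + (\prod_l x l) *: ((\row_i (x i)^-1)^T *m \row_i (x i)^-1).
Proof.
move=> x_neq0; apply/matrixP => i j.
rewrite /hessian !mxE big_ord1 !mxE.
rewrite /W_pdP !lderiv_cat !lderiv_enum !leval_cat !leval_enum /leval big_seq1 /=.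
rewrite !(@sum_supported _ _ j) => [|l|l]; last first.
- by rewrite eq_sym => /negbTE ->; rewrite mulr0z mulr0 !mul0r.
- by rewrite eq_sym => /negbTE ->; rewrite oppr0 mulr0z mulr0 !mul0r.
rewrite /= eqxx subrr !monomial_subdelta // monomial_deltaN monomial_const // expr1z.
have [<-|/negbTE ne] := eqVneq i j; rewrite ?eqxx ?ne /=.
- by rewrite !(rmorphB, rmorphN, rmorph0, rmorph1) mulr1n; field; exact: x_neq0.
- by rewrite !(rmorphB, rmorphN, rmorph0, rmorph1) mulr0n; field; rewrite !x_neq0.
Qed.

(* Diagonal plus rank one: if v (D + c u^T u) = 0 then v_j = -c s u_j / D_j with
   s = v u^T, and summing gives s (1 + c sum_j u_j^2 / D_j) = 0, so s = 0 = v. *)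
Lemma unitmx_diag_add_rank1 (F : fieldType) n (d u : 'rV[F]_n) (c : F) :
  (forall j, d 0 j != 0) ->
  1 + c * \sum_j u 0 j ^+ 2 / d 0 j != 0 ->
  diag_mx d + c *: (u^T *m u) \in unitmx.
Proof.
move=> d_neq0 sum_neq0.
rewrite -row_free_unit -kermx_eq0; apply/rowV0P => v /sub_kermxP.
rewrite mulmxDr -scalemxAr mulmxA => /matrixP kerv.
pose s := (v *m u^T) 0 0.
have vE j : v 0 j = - c * s * u 0 j / d 0 j.
  have := kerv 0 j; rewrite mul_mx_diag !mxE big_ord1 -/s => eq0.
  by apply: (mulIf (d_neq0 j)); rewrite divfK //; apply: (eq_by_relation eq0); ring.
have s0 : s = 0.
  have : s * (1 + c * \sum_j u 0 j ^+ 2 / d 0 j) = 0.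
    rewrite mulrDr mulr1 mulr_sumr mulr_sumr {1}/s mxE -big_split /=.
    by apply: big1 => j _; rewrite mxE vE; field.
  by move/eqP; rewrite mulf_eq0 (negbTE sum_neq0) orbF => /eqP.
by apply/rowP => j; rewrite vE s0 mxE !(mulr0, mul0r).
Qed.

Lemma quadratic_other_root (K : fieldType) (P a t : K) :
  a != 0 -> a ^+ 2 + P * a - 1 = 0 -> t ^+ 2 + P * t - 1 = 0 -> t = a \/ t = - a^-1.
Proof.
move=> a_neq0 root_a root_t.
have aP : a + P = a^-1.
  by apply: (mulfI a_neq0); rewrite mulfV //; apply: (eq_by_relation root_a); ring.
have : (t - a) * (t + a^-1) = (t ^+ 2 + P * t - 1) - (a ^+ 2 + P * a - 1).
  by rewrite -aP; ring.
rewrite root_t root_a subrr => /eqP; rewrite mulf_eq0 subr_eq0 addr_eq0.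
by case/orP => /eqP ->; [left | right].
Qed.

(* With e even, 4 (e-1)^m (e+1)^r is even while (e+1)^(m+1) (e-1)^(r+1) is odd. *)
Lemma parity_obstruction (e : int) (m r : nat) : (2 %| e)%Z ->
  4 * (e - 1) ^+ m * (e + 1) ^+ r != (e + 1) ^+ m.+1 * (e - 1) ^+ r.+1.
Proof.
case/dvdzP=> D ->; apply/eqP => /(congr1 (fun z : int => (z%:~R : 'F_2))).
rewrite !rmorphM !rmorphXn !rmorphD !rmorphN !rmorphM /= !rmorph1.
have two0 : (2%:~R : 'F_2) = 0 by apply/eqP.
have four0 : (1 + (1 + (1 + 1)) : 'F_2) = 0 by apply/eqP.
have minus1 : (- 1 : 'F_2) = 1 by apply/eqP.
rewrite two0 four0 minus1 !mulr0 !add0r !expr1n !mul1r !mul0r.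
by move=> zero_one; have := @oner_neq0 'F_2; rewrite -{1}zero_one eqxx.
Qed.

Lemma power_identity (K : fieldType) (b d : K) (m r : nat) :
  b != 0 -> b * (d - 1) = d + 1 -> b - 2 + b^-1 = b ^+ m * b^-1 ^+ r ->
  4 * (d - 1) ^+ m * (d + 1) ^+ r = (d + 1) ^+ m.+1 * (d - 1) ^+ r.+1.
Proof.
move=> b_neq0 bd bE.
have bd' : b^-1 * (d + 1) = d - 1 by rewrite -bd mulKf.
have four : (b - 2 + b^-1) * ((d - 1) * (d + 1)) = 4.
  transitivity (b * (d - 1) * (d + 1) - 2 * ((d - 1) * (d + 1)) + b^-1 * (d + 1) * (d - 1)).
    by field.
  by rewrite bd bd'; ring.
rewrite -four bE.
transitivity ((b * (d - 1)) ^+ m * (b^-1 * (d + 1)) ^+ r * ((d - 1) * (d + 1))).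
  by rewrite !exprMn; ring.
by rewrite bd bd' !exprS; ring.
Qed.

(* The equation a - a^-1 = -(a^m (-a^-1)^r) satisfied by a coordinate of a
   critical point, with m + r even, in characteristic 0. *)
Section CriticalEquation.
Variables (C : numFieldType) (a : C) (m r k : nat).
Hypotheses (a_neq0 : a != 0) (mr_even : (m + r = 2 * k)%N).
Hypothesis crit_eq : a - a^-1 = - (a ^+ m * (- a^-1) ^+ r).

(* If a^2 = -1 then -a^-1 = a, and the equation gives 2a = -a^(2k), whose
   square reads -4 = 1. *)
Lemma one_add_sqr_neq0 : 1 + a ^+ 2 != 0.
Proof.
apply/negP => /eqP sum0.
have a2 : a ^+ 2 = -1 by apply/eqP; rewrite -subr_eq0 opprK addrC sum0.
have ainv : a^-1 = - a.
  by apply: (mulfI a_neq0); rewrite mulfV // mulrN -expr2 a2 opprK.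
move: crit_eq; rewrite ainv opprK -exprD mr_even exprM a2.
move=> /(congr1 (fun z => z ^+ 2)); rewrite sqrrN -exprM mulnC exprM sqrrN !expr1n.
have -> : (a + a) ^+ 2 = 4 * a ^+ 2 by ring.
rewrite a2 => /eqP; rewrite -subr_eq0.
have -> : 4 * -1 - 1 = - (5%:R : C) by ring.
by rewrite oppr_eq0 pnatr_eq0.
Qed.

Lemma one_add_sqr_inv_neq0 : 1 + (- a^-1) ^+ 2 != 0.
Proof.
have -> : 1 + (- a^-1) ^+ 2 = (1 + a ^+ 2) / a ^+ 2 by field.
by rewrite mulf_neq0 ?invr_neq0 ?expf_neq0 ?one_add_sqr_neq0.
Qed.

Lemma ratio_inv :
  (1 - (- a^-1) ^+ 2) / (1 + (- a^-1) ^+ 2) = - ((1 - a ^+ 2) / (1 + a ^+ 2)).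
Proof. by field; rewrite one_add_sqr_neq0. Qed.

Lemma signed_count_neq0 : 1 + (m%:R - r%:R) * ((1 - a ^+ 2) / (1 + a ^+ 2)) != 0.
Proof.
set d : C := m%:R - r%:R.
apply/negP => /eqP sum0.
have bd : a ^+ 2 * (d - 1) = d + 1.
  have := congr1 (fun z => z * (1 + a ^+ 2)) sum0; rewrite mul0r => eq0.
  by apply/esym/(eq_by_relation eq0); field; rewrite one_add_sqr_neq0.
have bE : a ^+ 2 - 2 + (a ^+ 2)^-1 = a ^+ 2 ^+ m * (a ^+ 2)^-1 ^+ r.
  rewrite -exprVn; have := congr1 (fun z => z ^+ 2) crit_eq.
  by rewrite sqrrN exprMn !(exprAC _ _ 2) sqrrN => <-; field.
have := power_identity (expf_neq0 2 a_neq0) bd bE.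
have dE : d = (m%:Z - r%:Z)%:~R by rewrite rmorphB.
have e_even : (2 %| m%:Z - r%:Z)%Z by apply/dvdzP; exists (k%:Z - r%:Z); lia.
rewrite dE; move: (m%:Z - r%:Z) e_even => e e_even key.
have /eqP := parity_obstruction m r e_even; apply; apply: (@intr_inj C).
by rewrite !(rmorphM, rmorphXn, rmorphD, rmorphN, rmorph1).
Qed.

End CriticalEquation.

Section CriticalPoints.
Variables (C : numFieldType) (k : nat) (x : 'I_(2 * k) -> C).
Hypotheses (k_gt0 : (0 < k)%N) (x_neq0 : forall j, x j != 0).
Hypothesis critical : forall j, x j ^+ 2 + (\prod_i x i) * x j - 1 = 0.

Lemma critical_point_data :
  (forall j, 1 + x j ^+ 2 != 0) /\ 1 + \sum_j (1 - x j ^+ 2) / (1 + x j ^+ 2) != 0.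
Proof.
have i0_lt : (0 < 2 * k)%N by rewrite muln_gt0.
pose a := x (Ordinal i0_lt).
have a_neq0 : a != 0 := x_neq0 _.
have root_a : a ^+ 2 + (\prod_i x i) * a - 1 = 0 := critical _.
have values j : x j = a \/ x j = - a^-1 := quadratic_other_root a_neq0 root_a (critical j).
pose A := [set j | x j == a].
have inA j : j \in A -> x j = a by rewrite inE => /eqP.
have notinA j : j \notin A -> x j = - a^-1.
  by rewrite inE; case: (values j) => ->; rewrite ?eqxx.
have card : (#|A| + #|~: A| = 2 * k)%N by rewrite cardsC card_ord.
have crit_a : a - a^-1 = - (a ^+ #|A| * (- a^-1) ^+ #|~: A|).
  rewrite -(prod_two_valued inA notinA); apply: (mulfI a_neq0).
  by apply: (eq_by_relation root_a); field.
split.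
  move=> j; case: (values j) => ->.
  - exact: one_add_sqr_neq0 a_neq0 card crit_a.
  - exact: one_add_sqr_inv_neq0 a_neq0 card crit_a.
rewrite (sum_two_valued (A := A) (u := (1 - a ^+ 2) / (1 + a ^+ 2))
                        (w := (1 - (- a^-1) ^+ 2) / (1 + (- a^-1) ^+ 2))); last 2 first.
- by move=> j /inA ->.
- by move=> j /notinA ->.
rewrite (ratio_inv a_neq0 card crit_a) mulNrn.
by have := signed_count_neq0 a_neq0 card crit_a; rewrite mulrBl !mulr_natl.
Qed.

End CriticalPoints.

Theorem mainTheorem7 (C : numClosedFieldType) (k : nat) (hk : (1 <= k)%N)
    (x : 'I_(2 * k) -> C) :
  (forall i, x i != 0) ->
  (forall j, gradient (W_pdP C (2 * k)) x j = 0) ->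
  hessian (W_pdP C (2 * k)) x \in unitmx.
Proof.
move=> x_neq0 grad0.
set P := \prod_i x i.
have critical j : x j ^+ 2 + P * x j - 1 = 0.
  move: (grad0 j); rewrite gradient_W // => /eqP.
  by rewrite mulf_eq0 invr_eq0 expf_eq0 (negbTE (x_neq0 j)) andbF orbF => /eqP.
have [sq_neq0 sum_neq0] := critical_point_data hk x_neq0 critical.
have diag_eq j : 2 - P * x j = 1 + x j ^+ 2.
  by apply/esym/(eq_by_relation (critical j)); ring.
rewrite hessian_W //; apply: unitmx_diag_add_rank1 => [j|].
  by rewrite mxE diag_eq mulf_neq0 ?invr_neq0 ?expf_neq0.
rewrite mulr_sumr (eq_bigr (fun j => (1 - x j ^+ 2) / (1 + x j ^+ 2))) // => j _.
have numer_eq : 1 - x j ^+ 2 = P * x j.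
  by apply/esym/(eq_by_relation (critical j)); ring.
by rewrite !mxE diag_eq numer_eq -/P; field; rewrite sq_neq0 x_neq0.
Qed.
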